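(* Let $m\equiv n\equiv 0\pmod 3$, $u\equiv 2,4\pmod 6$, $v=2m+2n+u$, $c<\binom u3$, and let $(u,c)$ satisfy (C2) with associated pair $(\lambda,\delta)$. Suppose (i) $(V,\mathcal A)$ is a simple NGDD$(2,3,v)$ of type $2^{(m,n)}u^1$ with size-2 groups $G_1,\dots,G_{m+n}$ and group $U$ of size $u$; (ii) $(V,\mathcal B)$ is a simple GDD$_{\lambda-1}(2,3,v)$ of type $1^{2m+2n}u^1$ with long group $U$; and (iii) $(U,\mathcal C)$ is an NWBTS$(u;c)$. If $\mathcal A,\mathcal B,\mathcal C$ are pairwise disjoint, then $\mathcal F=\mathcal A\cup\mathcal B\cup\mathcal C$ is the block set of an NWBTS$(v;|\mathcal F|)$, where $3|\mathcal F|=\lambda\binom v2+m-n+\delta$.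
   Context: NGDD$(2,3,v)$ of type $2^{(m,n)}u^1$: $V$ is a set of $v=2(m+n)+u$ points partitioned into groups $G_1,\dots,G_{m+n}$ of size 2 and $U$ of size $u$; a set of triples on $V$ such that each pair $G_i$ with $1\le i\le m$ lies in exactly two blocks, each pair in $\binom U2\cup\{G_i:m<i\le m+n\}$ lies in no block, and every other pair of $V$ lies in exactly one block. A GDD$_\mu(2,3,v)$ of type $1^{v-u}u^1$ with long group $U$: triples on $V$, none containing two points of $U$, every pair not inside $U$ in exactly $\mu$ blocks. Simple: no repeated blocks. A triple system TS$(v;b)$ is a pair $(V,\mathcal F)$, $V$ a set of $v\ge3$ points, $\mathcal F$ a multiset of $b$ 3-subsets (blocks). $\lambda_{x_1,\dots,x_j}$ is the number of blocks containing $\{x_1,\dots,x_j\}$; $j$-balanced means $|\lambda_{x_1,\dots,x_j}-\lambda_{y_1,\dots,y_j}|\le1$ for all $j$-subsets. Associated pair $(\lambda,\varepsilon)$ of $(v,b)$: $3b=\lambda\binom v2+\varepsilon$, $-v/2<\varepsilon<v/2$. (C2): $v$ even and $\lambda v(v-1)/6-v/6<b<\lambda v(v-1)/6+v/6$ for odd $\lambda$ (the $\lambda$ of the associated pair). Defect graph (when all $\lambda_{x,y}\in\{\lambda-1,\lambda,\lambda+1\}$): graph on $V$ with edges of pairs with $\lambda_{x,y}=\lambda+1$ (label $+1$) or $\lambda-1$ (label $-1$); isomorphisms preserve labels. $H^0_{v,\varepsilon}$: perfect matching with $(v+2\varepsilon)/4$ edges $+1$, $(v-2\varepsilon)/4$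 edges $-1$; $H^1_{v,\varepsilon}$: disjoint union of a $K_{1,3}$ with two $+1$ and one $-1$ edge and a matching of the other $v-4$ vertices with $(v-6+2\varepsilon)/4$ edges $+1$, $(v-2-2\varepsilon)/4$ edges $-1$; $H^2_{v,\varepsilon}$: disjoint union of a $K_{1,3}$ with one $+1$ and two $-1$ edges and a matching of the other $v-4$ vertices with $(v-2+2\varepsilon)/4$ edges $+1$, $(v-6-2\varepsilon)/4$ edges $-1$. Under (C2) a TS is nearly 2-balanced if all $\lambda_{x,y}\in\{\lambda-1,\lambda,\lambda+1\}$ and its defect graph is $\cong H^0_{v,\varepsilon}$ when $\varepsilon\equiv v/2\pmod 2$, and $\cong H^1_{v,\varepsilon}$ or $H^2_{v,\varepsilon}$ otherwise. An NWBTS is a nearly 2-balanced, 3-balanced TS. *)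

From mathcomp Require Import all_boot all_order all_algebra.
Set Implicit Arguments. Unset Strict Implicit. Unset Printing Implicit Defensive.
Import Order.TTheory GRing.Theory Num.Theory.
Local Open Scope ring_scope.

Section TripleSystems.
Variable T : finType.

(* Blocks are given as a list (multiset) of subsets of T. *)
Definition lam (F : seq {set T}) (S : {set T}) : nat :=
  count (fun X : {set T} => S \subset X) F.

Definition is_TS (P : {set T}) (F : seq {set T}) : Prop :=
  (3 <= #|P|)%N /\ forall X, X \in F -> X \subset P /\ #|X| = 3%N.

Definition jbalanced (P : {set T}) (F : seq {set T}) (j : nat) : Prop :=
  forall S1 S2 : {set T}, S1 \subset P -> S2 \subset P ->
    #|S1| = j -> #|S2| = j -> (lam F S1 <= lam F S2 + 1)%N.

Definition assoc_pair (v b lam0 : nat) (eps : int) : Prop :=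
  (3 * b)%:Z = (lam0 * 'C(v, 2))%:Z + eps /\
  - (v%:Z) < 2 * eps /\ 2 * eps < v%:Z.

Definition C2 (v b lam0 : nat) (eps : int) : Prop :=
  ~~ odd v /\ odd lam0 /\ assoc_pair v b lam0 eps.

(* Concrete labelled graphs H^k_{v,eps} on vertex set {0,...,v-1}:
   label +1 / -1 for edges, 0 for non-edges. *)
Definition Hlab (k v : nat) (e : int) (i j : nat) : int :=
  let a := minn i j in let b := maxn i j in
  if a == b then 0 else
  match k with
  | 0%N => (* perfect matching {2p, 2p+1}, first (v+2e)/4 pairs +1, rest -1 *)
      if a./2 == b./2 then
        (if (a./2)%:Z < ((v%:Z + 2 * e) %/ 4)%Z then 1 else -1)
      else 0
  | 1%N => (* K_{1,3}: centre 0, edges 01,02 (+1), 03 (-1);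
              matching on 4..v-1, first (v-6+2e)/4 pairs +1, rest -1 *)
      if a == 0%N then
        (if (b == 1%N) || (b == 2%N) then 1 else if b == 3%N then -1 else 0)
      else if (4 <= a)%N && (a./2 == b./2) then
        (if ((a./2 - 2)%N)%:Z < ((v%:Z - 6 + 2 * e) %/ 4)%Z then 1 else -1)
      else 0
  | _ => (* K_{1,3}: centre 0, edge 01 (+1), 02,03 (-1);
            matching on 4..v-1, first (v-2+2e)/4 pairs +1, rest -1 *)
      if a == 0%N then
        (if b == 1%N then 1 else if (b == 2%N) || (b == 3%N) then -1 else 0)
      else if (4 <= a)%N && (a./2 == b./2) then
        (if ((a./2 - 2)%N)%:Z < ((v%:Z - 2 + 2 * e) %/ 4)%Z then 1 else -1)
      else 0
  end.

(* H^k_{v,eps} exists: edge counts are nonnegative integers *)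
Definition Hwf (k v : nat) (e : int) : Prop :=
  match k with
  | 0%N => (4 %| v%:Z + 2 * e)%Z /\ 0 <= v%:Z + 2 * e /\ 0 <= v%:Z - 2 * e
  | 1%N => (4 %| v%:Z - 6 + 2 * e)%Z /\ 0 <= v%:Z - 6 + 2 * e /\ 0 <= v%:Z - 2 - 2 * e
  | _ => (4 %| v%:Z - 2 + 2 * e)%Z /\ 0 <= v%:Z - 2 + 2 * e /\ 0 <= v%:Z - 6 - 2 * e
  end.

Definition defect_iso (P : {set T}) (F : seq {set T}) (lam0 k : nat) (e : int)
  : Prop :=
  Hwf k #|P| e /\
  exists f : T -> 'I_#|P|, {in P &, injective f} /\
    forall x y, x \in P -> y \in P -> x != y ->
      (lam F [set x; y])%:Z - lam0%:Z = Hlab k #|P| e (f x) (f y).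

Definition nearly2balanced (P : {set T}) (F : seq {set T}) : Prop :=
  exists (lam0 : nat) (eps : int),
    C2 #|P| (size F) lam0 eps /\
    (forall x y, x \in P -> y \in P -> x != y ->
       (lam0 <= lam F [set x; y] + 1 /\ lam F [set x; y] <= lam0 + 1)%N) /\
    (if (eps == (#|P|./2)%:Z %[mod 2])%Z
     then defect_iso P F lam0 0 eps
     else defect_iso P F lam0 1 eps \/ defect_iso P F lam0 2 eps).

Definition NWBTS (P : {set T}) (b : nat) (F : seq {set T}) : Prop :=
  is_TS P F /\ size F = b /\ nearly2balanced P F /\ jbalanced P F 3.

Definition NGDD (m n : nat) (U : {set T}) (G : 'I_(m + n) -> {set T})
  (A : seq {set T}) : Prop :=
  uniq A /\ (forall X, X \in A -> #|X| = 3%N) /\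
  forall x y : T, x != y ->
    lam A [set x; y] =
      if [exists i : 'I_(m + n), ([set x; y] == G i) && (i < m)%N] then 2%N
      else if ((x \in U) && (y \in U)) ||
              [exists i : 'I_(m + n), ([set x; y] == G i) && (m <= i)%N]
      then 0%N else 1%N.

Definition GDD (U : {set T}) (mu : nat) (B : seq {set T}) : Prop :=
  uniq B /\ (forall X, X \in B -> #|X| = 3%N /\ (#|X :&: U| <= 1)%N) /\
  forall x y : T, x != y -> ~~ ((x \in U) && (y \in U)) ->
    lam B [set x; y] = mu.

End TripleSystems.

Arguments NGDD {T} m n U G A.
Arguments lam {T} F S.
Arguments is_TS {T} P F.
Arguments jbalanced {T} P F j.
Arguments defect_iso {T} P F lam0 k e.
Arguments nearly2balanced {T} P F.
Arguments NWBTS {T} P b F.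
Arguments GDD {T} U mu B.

From mathcomp Require Import all_boot all_order all_algebra.
From mathcomp Require Import zify.
Import Order.TTheory GRing.Theory Num.Theory.
Set Implicit Arguments.
Unset Strict Implicit.
Unset Printing Implicit Defensive.
Local Open Scope ring_scope.

(* Let [F = A ++ B ++ C].  A pair of points outside [U] lies in [lam0] blocks of [F] if it is
   no group, and in [lam0 + 1] or [lam0 - 1] blocks if it is a group [G i] with [i < m] or
   [m <= i]; a pair inside [U] is covered by [C] only.  So the defect graph of [F] is that of [C]
   plus a perfect matching on the groups with [m] positive and [n] negative edges.  Inserting the
   positive edges right after those of [C] and appending the negative ones exhibits it as the same
   [H^k], now on [v] vertices and with [eps = m - n + delta]; summing the defects over all pairs
   gives [3 |F| = lam0 C(v, 2) + m - n + delta].  Finally a triple is covered at most once: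
   outside [U] only by the simple and disjoint [A] and [B], inside [U] only by [C], which misses
   some triple and is 3-balanced. *)

(* [Hnum k v e / 4] is the number of +1 matching edges of [H^k_{v,e}]; they and, for [k > 0],
   the star occupy the first [Hhead k P] vertices. *)
Definition Hnum (k v : nat) (e : int) : int :=
  match k with
  | 0%N => v%:Z + 2 * e
  | 1%N => v%:Z - 6 + 2 * e
  | _ => v%:Z - 2 + 2 * e
  end.

Definition Hhead (k P : nat) : nat := (2 * P + (if k is 0 then 0 else 4))%N.

Lemma Hwf_head k v e :
  Hwf k v e -> exists P : nat, Hnum k v e = 4 * P%:Z /\ (Hhead k P <= v)%N.
Proof.
by case: k => [|[|k]] [/dvdzP[q Eq] [h1 h2]]; exists `|q|%N; rewrite /Hhead /=; split; lia.
Qed.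

Lemma Hwf_grow k u d m n : Hwf k u d -> Hwf k (u + 2 * (m + n))%N (m%:Z - n%:Z + d).
Proof. by case: k => [|[|k]] [h0 [h1 h2]]; (split; [lia | split; lia]). Qed.

Lemma Hlab_range k v e i j : Hlab k v e i j \in [:: 0; 1; -1].
Proof. by rewrite /Hlab; case: k => [|[|k]]; repeat (case: ifP => _). Qed.

Lemma divz_4mul (P : nat) : ((4 * P%:Z) %/ 4)%Z = P%:Z.
Proof. by rewrite mulrC mulzK. Qed.

Definition group_sign (m i : nat) : int := if (i < m)%N then 1 else -1.

Definition vcode := (nat + nat * bool)%type.

(* Positions in [H^k_{u + 2(m + n), m - n + d}] of the vertices of [H^k_{u,d}] ([inl j]) and of
   the two points of group [i] ([inr (i, b)]): the first [t] vertices stay, the [m] positive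
   groups follow as new +1 edges, the rest of [H^k_{u,d}] is shifted by [2m], and the [n]
   negative groups come last. *)
Definition grow_pos (t u m : nat) (a : vcode) : nat :=
  match a with
  | inl j => if (j < t)%N then j else (j + 2 * m)%N
  | inr (i, b) => ((if (i < m)%N then t + 2 * i else u + 2 * i) + b)%N
  end.

Definition grow_lab (k u : nat) (d : int) (m : nat) (a a' : vcode) : int :=
  match a, a' with
  | inl j, inl j' => Hlab k u d j j'
  | inr (i, b), inr (i', b') => if (i == i') && (b != b') then group_sign m i else 0
  | _, _ => 0
  end.

Definition vcode_ok (u mn : nat) (a : vcode) : bool :=
  match a with inl j => (j < u)%N | inr (i, _) => (i < mn)%N end.

Local Open Scope nat_scope.

Lemma Hlab_grow_pos k u d m n P a a' :
  Hnum k u d = (4 * P%:Z)%R -> Hhead k P <= u -> ~~ odd u ->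
  vcode_ok u (m + n) a -> vcode_ok u (m + n) a' ->
  Hlab k (u + 2 * (m + n)) (m%:Z - n%:Z + d)%R
    (grow_pos (Hhead k P) u m a) (grow_pos (Hhead k P) u m a')
  = grow_lab k u d m a a'.
Proof.
move=> EP htu ue.
have EPm : Hnum k (u + 2 * (m + n)) (m%:Z - n%:Z + d)%R = (4 * (P + m)%:Z)%R.
  by case: k EP {htu} => [|[|k]] /=; lia.
case: k EP EPm htu => [|[|k]] /= EP EPm; rewrite /Hhead /= => htu;
  case: a => [j|[i []]]; case: a' => [j'|[i' []]] /= ok ok';
  case: ltnP => ?; case: ltnP => ?;
  rewrite /Hlab /group_sign ?EP ?EPm ?divz_4mul;
  repeat (case: ifP => ?); lia.
Qed.

Lemma grow_pos_inj t u m mn a a' : t <= u ->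
  vcode_ok u mn a -> vcode_ok u mn a' -> grow_pos t u m a = grow_pos t u m a' -> a = a'.
Proof.
move=> htu; case: a => [j|[i b]]; case: a' => [j'|[i' b']] /= ok ok'.
- by move=> E; congr inl; move: E; do 2 case: ifP => ?; lia.
- by do 2 case: ifP => ?; case: b'; lia.
- by do 2 case: ifP => ?; case: b; lia.
- move=> E; suff [-> ->] : i = i' /\ b = b' by [].
  by move: b b' E => [] []; do 2 case: ifP => ?; lia.
Qed.

Lemma grow_pos_lt t u m n a : t <= u -> vcode_ok u (m + n) a ->
  grow_pos t u m a < u + 2 * (m + n).
Proof. by move=> htu; case: a => [j|[i []]] /=; case: ifP; lia. Qed.

Local Open Scope ring_scope.

Section Blocks.
Variable T : finType.
Implicit Types (P S : {set T}) (L : seq {set T}).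

Definition pairs_of P : {set {set T}} := [set p : {set T} | p \subset P & #|p| == 2%N].

Lemma lam_cat L1 L2 S : lam (L1 ++ L2) S = (lam L1 S + lam L2 S)%N.
Proof. exact: count_cat. Qed.

Lemma lam_sub L S S' : S' \subset S -> (lam L S <= lam L S')%N.
Proof. by move=> sS'S; apply: sub_count => X /= /(subset_trans sS'S). Qed.

Lemma lam_out L P S :
  (forall X, X \in L -> X \subset P) -> ~~ (S \subset P) -> lam L S = 0%N.
Proof.
move=> LP SP; apply/eqP; rewrite -leqn0 leqNgt -has_count.
by apply/hasPn => X /LP XP; apply: contra SP => /subset_trans->.
Qed.

Lemma lam_triple_le1 L S : uniq L -> (forall X, X \in L -> #|X| = 3%N) ->
  #|S| = 3%N -> (lam L S <= 1)%N.
Proof.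
move=> uL L3 S3; rewrite /lam (@eq_in_count _ _ (pred1 S)) => [|X XL /=].
  by rewrite count_uniq_mem // leq_b1.
by apply/idP/eqP => [SX|->//]; apply/esym/eqP; rewrite eqEcard SX L3 ?S3.
Qed.

Lemma lam_pair_count L P :
  (forall X, X \in L -> X \subset P /\ #|X| = 3%N) ->
  (\sum_(p in pairs_of P) lam L p = 3 * size L)%N.
Proof.
move=> LP.
under eq_bigr => p _ do rewrite /lam -sum1_count big_mkcond /=.
rewrite exchange_big /= -sum1_size big_distrr /=; apply: eq_big_seq => X /LP[XP X3].
rewrite muln1 -big_mkcondr -[3%N]/'C(3, 2) -X3 -cards_draws -sum1_card.
apply: eq_bigl => p; rewrite !inE; have [pX|_] := boolP (p \subset X).
  by rewrite (subset_trans pX XP) andbT.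
by rewrite andbF.
Qed.

Definition defect L (l : nat) S : int := (lam L S)%:Z - l%:Z.

Lemma defect_sum L P (l : nat) :
  (forall X, X \in L -> X \subset P /\ #|X| = 3%N) ->
  \sum_(p in pairs_of P) defect L l p = (3 * size L)%:Z - (l * 'C(#|P|, 2))%:Z.
Proof.
move=> LP; rewrite sumrB -(lam_pair_count LP) sumr_const cards_draws.
by rewrite (big_morph Posz PoszD (erefl _)) PoszM -[('C(_, _))%:Z]natz mulr_natr.
Qed.

Lemma lam_GDD_pair U mu L (x y : T) : GDD U mu L -> x != y ->
  lam L [set x; y] = if [set x; y] \subset U then 0%N else mu.
Proof.
move=> [_ [L3 LU]] xy; rewrite subUset !sub1set.
case: ifP => [/andP[xU yU]|xyU]; last by rewrite LU // xyU.
apply/eqP; rewrite -leqn0 leqNgt -has_count; apply/hasPn => X /L3[_ XU1].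
apply: contraL XU1 => xyX; rewrite -ltnNge.
have /subset_leq_card : [set x; y] \subset X :&: U by rewrite subsetI xyX subUset !sub1set xU yU.
by rewrite cards2 xy.
Qed.

Lemma jbalanced_le1 P L j :
  (forall S, S \subset P -> #|S| = j -> (lam L S <= 1)%N) -> jbalanced P L j.
Proof. by move=> le1 S1 S2 S1P _ S1j _; rewrite (leq_trans (le1 S1 S1P S1j)) ?leq_addl. Qed.

Lemma balanced_lam_le1 P L S :
  (forall X, X \in L -> X \subset P /\ #|X| = 3%N) -> (size L < 'C(#|P|, 3))%N ->
  jbalanced P L 3 -> S \subset P -> #|S| = 3%N -> (lam L S <= 1)%N.
Proof.
move=> LP small bal SP S3.
have [S0] : exists2 S0, S0 \in [set S : {set T} | S \subset P & #|S| == 3%N] & S0 \notin L.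
  apply/exists_inP; apply: contraTT small => /exists_inPn allL; rewrite -leqNgt.
  rewrite -cards_draws (leq_trans _ (card_size L)) //; apply/subset_leq_card/subsetP => X.
  by move/allL; rewrite negbK.
rewrite inE => /andP[S0P /eqP S03] S0L.
have lamS0 : lam L S0 = 0%N.
  apply/eqP; rewrite -leqn0 leqNgt -has_count; apply/hasPn => X XL /=.
  apply: contra S0L => S0X; suff -> : S0 = X by [].
  by apply/eqP; rewrite eqEcard S0X (LP X XL).2 S03.
by have := bal S S0 SP S0P S3 S03; rewrite lamS0.
Qed.

Lemma assoc_pair_unique v b l l' (e e' : int) : (3 <= v)%N ->
  assoc_pair v b l e -> assoc_pair v b l' e' -> l = l' /\ e = e'.
Proof.
move=> v3 [E [e_gt e_lt]] [E' [e'_gt e'_lt]].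
have vC : (v <= 'C(v, 2))%N.
  case: v v3 {E E' e_gt e_lt e'_gt e'_lt} => [|w] // w2.
  by rewrite binS bin1 addnC -addn1 leq_add2l bin_gt0.
(* [|e - e'| < v <= 'C(v, 2)] *)
have ll' : l = l'.
  by apply/eqP; rewrite eqn_leq; apply/andP; split; apply/negP => lt; nia.
by split; last by subst l'; lia.
Qed.

Lemma defect_iso_range P L l k e (x y : T) : defect_iso P L l k e ->
  x \in P -> y \in P -> x != y ->
  (l <= lam L [set x; y] + 1 /\ lam L [set x; y] <= l + 1)%N.
Proof.
move=> [_ [f [_ Ef]]] xP yP xy; have := Ef x y xP yP xy.
by have := Hlab_range k #|P| e (f x) (f y); rewrite !inE => /or3P[] /eqP->; lia.
Qed.

End Blocks.

Lemma pick_pair (T : finType) (S : {set T}) (x y : T) :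
  #|S| = 2%N -> x \in S -> y \in S -> x != y ->
  ([pick z in S] == Some x) = ([pick z in S] != Some y).
Proof.
move=> S2 xS yS xy; have ES : S = [set x; y].
  by apply/esym/eqP; rewrite eqEcard cards2 xy S2 subUset !sub1set xS yS.
case: pickP => [z|/(_ x)]; last by rewrite xS.
rewrite ES !inE => /orP[] /eqP->; rewrite eqxx; first by apply/esym; exact: xy.
by apply/negbTE; rewrite eq_sym; exact: xy.
Qed.

Definition group_partition (T : finType) (k : nat) (U : {set T}) (G : 'I_k -> {set T}) :=
  [/\ forall i, #|G i| = 2%N, forall i j, i != j -> [disjoint G i & G j],
      forall i, [disjoint G i & U] & U :|: \bigcup_(i < k) G i = [set: T]].

Section GroupPartition.

Variables (T : finType) (m n : nat) (U : {set T}) (G : 'I_(m + n) -> {set T}).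
Hypothesis partG : group_partition U G.

Let G_card : forall i, #|G i| = 2%N. Proof. by case: partG. Qed.
Let G_disjoint : forall i j, i != j -> [disjoint G i & G j]. Proof. by case: partG. Qed.
Let G_disjointU : forall i, [disjoint G i & U]. Proof. by case: partG. Qed.
Let G_cover : U :|: \bigcup_(i < m + n) G i = [set: T]. Proof. by case: partG. Qed.

Lemma group_notin_U i x : x \in G i -> x \notin U.
Proof. by move=> xi; rewrite (disjointFr (G_disjointU i) xi). Qed.

Lemma group_unique i j x : x \in G i -> x \in G j -> i = j.
Proof.
move=> xi xj; apply/eqP; apply: contraTT xj => ij.
by rewrite (disjointFr (G_disjoint ij) xi).
Qed.

Lemma group_exists x : x \notin U -> exists i, x \in G i.
Proof.
move=> xU; have : x \in U :|: \bigcup_(i < m + n) G i by rewrite G_cover inE.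
by rewrite inE (negbTE xU) => /bigcupP[i _ xi]; exists i.
Qed.

Lemma card_group_partition : #|T| = (#|U| + 2 * (m + n))%N.
Proof.
have UG : [disjoint U & \bigcup_(i < m + n) G i].
  by apply/bigcup_disjoint => i _; rewrite disjoint_sym.
rewrite -cardsT -G_cover cardsU (disjoint_setI0 UG) cards0 subn0; congr (_ + _)%N.
rewrite -sum1_card partition_disjoint_bigcup //=.
under eq_bigr => i _ do rewrite sum1_card G_card.
by rewrite sum_nat_const card_ord mulnC.
Qed.

Lemma pair_eq_group i (x y : T) : x != y ->
  ([set x; y] == G i) = (x \in G i) && (y \in G i).
Proof.
move=> xy; apply/eqP/andP => [<-|[xi yi]]; first by rewrite !inE !eqxx orbT.
by apply/eqP; rewrite eqEcard cards2 xy G_card subUset !sub1set xi yi.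
Qed.

Definition group_defect (p : {set T}) : int :=
  \sum_(i < m + n) (if p == G i then group_sign m i else 0).

Lemma group_defect_in i (x y : T) : x != y -> x \in G i -> y \in G i ->
  group_defect [set x; y] = group_sign m i.
Proof.
move=> xy xi yi; rewrite /group_defect (bigD1 i) //= pair_eq_group // xi yi big1 ?addr0 //.
move=> j ji; rewrite pair_eq_group //; case: (boolP (x \in G j)) => //= xj.
by rewrite (group_unique xj xi) eqxx in ji.
Qed.

Lemma group_defect_out (x y : T) : x != y ->
  (forall i, x \in G i -> y \notin G i) -> group_defect [set x; y] = 0.
Proof.
move=> xy sep; rewrite /group_defect big1 // => i _.
by rewrite pair_eq_group //; case: (boolP (x \in G i)) => //= /sep/negbTE->.
Qed.

Lemma sum_group_defect :
  \sum_(p in pairs_of [set: T] | ~~ (p \subset U)) group_defect p = m%:Z - n%:Z.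
Proof.
rewrite exchange_big /= (eq_bigr (fun i : 'I_(m + n) => group_sign m i)) => [|i _].
  rewrite big_split_ord /= (eq_bigr (fun=> 1)) => [|i _]; last by rewrite /group_sign ltn_ord.
  rewrite [X in _ + X](eq_bigr (fun=> -1)) => [|i _]; last by rewrite /group_sign ltnNge leq_addr.
  by rewrite !sumr_const !card_ord mulNrn !natz.
rewrite (bigD1 (G i)) /=; last first.
  rewrite inE subsetT G_card /=; have [x xi] : exists x, x \in G i.
    by apply/set0Pn; rewrite -card_gt0 G_card.
  by apply: contraL (group_notin_U xi) => /subsetP->.
by rewrite eqxx big1 ?addr0 // => p /andP[_ /negbTE->].
Qed.

Lemma lam_NGDD_pair A (x y : T) : NGDD m n U G A -> x != y ->
  (lam A [set x; y])%:Z =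
    if [set x; y] \subset U then 0 else 1 + group_defect [set x; y].
Proof.
move=> [_ [_ lamA]] xy; rewrite lamA // subUset !sub1set.
have [i /andP[xi yi] | sep] := pickP (fun i => (x \in G i) && (y \in G i)).
  have group_pair (P : pred 'I_(m + n)) : [exists j, ([set x; y] == G j) && P j] = P i.
    apply/existsP/idP => [[j /andP[/eqP Ej Pj]] | Pi].
      have xj : x \in G j by rewrite -Ej !inE eqxx.
      by rewrite (group_unique xj xi) in Pj.
    by exists i; rewrite pair_eq_group ?xi ?yi.
  rewrite (group_pair (fun j => j < m)%N) (group_pair (fun j => m <= j)%N).
  rewrite (negbTE (group_notin_U xi)) /= (group_defect_in xy xi yi) /group_sign.
  by case: ltnP.
have no_group (P : pred 'I_(m + n)) : [exists j, ([set x; y] == G j) && P j] = false.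
  by apply/existsP => -[j]; rewrite pair_eq_group // sep.
rewrite !no_group orbF (group_defect_out xy) ?addr0 => [|i xi]; first by case: ifP.
by have := sep i; rewrite /= xi => /negbT.
Qed.

Definition defect_split (C F : seq {set T}) (lam0 : nat) : Prop :=
  forall x y, x != y -> defect F lam0 [set x; y] =
    if [set x; y] \subset U then defect C lam0 [set x; y] else group_defect [set x; y].

Lemma defect_split_union (A B C : seq {set T}) (lam0 : nat) :
  NGDD m n U G A -> GDD U (lam0 - 1) B -> (forall X, X \in C -> X \subset U) ->
  (0 < lam0)%N -> defect_split C (A ++ B ++ C) lam0.
Proof.
move=> hA hB CU lam0_gt0 x y xy; rewrite /defect.
rewrite !lam_cat !PoszD (lam_NGDD_pair hA xy) (lam_GDD_pair hB xy).
by case: ifP => xyU; [rewrite !add0r | rewrite (lam_out CU) ?xyU //; lia].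
Qed.

Definition vertex_code (fU : T -> nat) (x : T) : vcode :=
  if [pick i | x \in G i] is Some i then inr (val i, [pick z in G i] == Some x)
  else inl (fU x).

Section VertexCode.

Variable fU : T -> nat.

Lemma vertex_code_U x : x \in U -> vertex_code fU x = inl (fU x).
Proof.
move=> xU; rewrite /vertex_code; case: pickP => // i xi.
by rewrite (negbTE (group_notin_U xi)) in xU.
Qed.

Lemma vertex_code_G i x : x \in G i ->
  vertex_code fU x = inr (val i, [pick z in G i] == Some x).
Proof.
move=> xi; rewrite /vertex_code; case: pickP => [j xj|/(_ i)]; last by rewrite xi.
by rewrite (group_unique xj xi).
Qed.

Lemma vertex_code_ok u x : (forall z, fU z < u)%N -> vcode_ok u (m + n) (vertex_code fU x).
Proof.
move=> fU_lt; case: (boolP (x \in U)) => [xU|/group_exists[i xi]].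
  by rewrite vertex_code_U /=.
by rewrite (vertex_code_G xi) /= ltn_ord.
Qed.

Lemma vertex_code_inj : {in U &, injective fU} -> injective (vertex_code fU).
Proof.
move=> fU_inj x y.
case: (boolP (x \in U)) => [xU|/group_exists[i xi]];
  case: (boolP (y \in U)) => [yU|/group_exists[j yj]].
- by rewrite !vertex_code_U // => -[]; apply: fU_inj.
- by rewrite (vertex_code_U xU) (vertex_code_G yj).
- by rewrite (vertex_code_U yU) (vertex_code_G xi).
rewrite (vertex_code_G xi) (vertex_code_G yj) => -[/val_inj ij]; subst j.
by apply: contra_eq => xy; rewrite (pick_pair (G_card i) xi yj xy); case: (_ == Some y).
Qed.

Lemma grow_lab_vertex_code k u (d : int) (x y : T) : x != y ->
  grow_lab k u d m (vertex_code fU x) (vertex_code fU y) =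
    if [set x; y] \subset U then Hlab k u d (fU x) (fU y) else group_defect [set x; y].
Proof.
move=> xy; rewrite subUset !sub1set.
case: (boolP (x \in U)) => [xU|/group_exists[i xi]];
  case: (boolP (y \in U)) => [yU|/group_exists[j yj]].
- by rewrite !vertex_code_U.
- rewrite (vertex_code_U xU) (vertex_code_G yj) andbF.
  by rewrite group_defect_out // => i xi; rewrite (negbTE (group_notin_U xi)) in xU.
- rewrite (vertex_code_U yU) (vertex_code_G xi) /=.
  by rewrite group_defect_out // => i' _; apply: contraL yU; apply: group_notin_U.
rewrite (vertex_code_G xi) (vertex_code_G yj) /=.
have [ij|ij] := eqVneq i j.
  subst j; rewrite eqxx (pick_pair (G_card i) xi yj xy) (group_defect_in xy xi yj).
  by case: (_ == Some y).
rewrite (inj_eq val_inj) (negbTE ij) group_defect_out // => i' xi'.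
by rewrite (group_unique xi' xi); apply: contraNN ij => yi; rewrite (group_unique yj yi).
Qed.

End VertexCode.

Lemma defect_iso_grow (C F : seq {set T}) (lam0 k : nat) (d : int) :
  ~~ odd #|U| -> defect_iso U C lam0 k d ->
  defect_split C F lam0 ->
  defect_iso [set: T] F lam0 k (m%:Z - n%:Z + d).
Proof.
move=> Ueven [wf [fC [fC_inj EfC]]] EF.
have [P [EP headP]] := Hwf_head wf.
pose code := vertex_code (fun x => val (fC x)).
pose pos x := grow_pos (Hhead k P) #|U| m (code x).
have code_ok x : vcode_ok #|U| (m + n) (code x).
  by apply: vertex_code_ok => z; exact: ltn_ord.
have pos_lt x : (pos x < #|[set: T]|)%N.
  by rewrite cardsT card_group_partition grow_pos_lt.
split; first by rewrite cardsT card_group_partition; exact: Hwf_grow.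
exists (fun x => Ordinal (pos_lt x)); split.
  move=> x y _ _ /(congr1 val) /= /(grow_pos_inj headP (code_ok x) (code_ok y)).
  by apply: vertex_code_inj => a b aU bU /val_inj; apply: fC_inj.
move=> x y _ _ xy /=; rewrite -/(defect F lam0 _) EF //.
rewrite cardsT card_group_partition Hlab_grow_pos //.
rewrite grow_lab_vertex_code //; case: ifP => // /subsetP xyU.
by rewrite /defect EfC ?xyU ?inE ?eqxx ?orbT.
Qed.

Lemma defect_parity_grow u (d : int) : ~~ odd u ->
  ((m%:Z - n%:Z + d == ((u + 2 * (m + n))./2)%:Z %[mod 2])%Z) =
  ((d == (u./2)%:Z %[mod 2])%Z).
Proof. by move=> u_even; apply/idP/idP; lia. Qed.

Lemma card_blocks_grow (C F : seq {set T}) (lam0 : nat) (d : int) :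
  (forall X, X \in C -> X \subset U /\ #|X| = 3%N) -> (forall X, X \in F -> #|X| = 3%N) ->
  defect_split C F lam0 ->
  (3 * size C)%:Z = (lam0 * 'C(#|U|, 2))%:Z + d ->
  (3 * size F)%:Z = (lam0 * 'C(#|T|, 2))%:Z + (m%:Z - n%:Z + d).
Proof.
move=> C3 F3 EF countC.
have F3T X : X \in F -> X \subset [set: T] /\ #|X| = 3%N.
  by rewrite subsetT; split; last exact: F3.
suff : \sum_(p in pairs_of [set: T]) defect F lam0 p =
    \sum_(p in pairs_of U) defect C lam0 p + (m%:Z - n%:Z).
  by rewrite !defect_sum // cardsT; lia.
rewrite (bigID (fun p : {set T} => p \subset U)) /= -sum_group_defect; congr (_ + _).
  rewrite (eq_bigl (fun p => p \in pairs_of U)) => [|p]; last by rewrite !inE subsetT andbAC.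
  apply: eq_bigr => p; rewrite inE => /andP[pU /cards2P[x [y [xy Ep]]]].
  by subst p; rewrite EF // pU.
apply: eq_bigr => p; rewrite inE subsetT /= => /andP[/cards2P[x [y [xy Ep]]] /negbTE pU].
by subst p; rewrite EF // pU.
Qed.

Lemma lam_union_triple_le1 (A B C : seq {set T}) (mu : nat) (S : {set T}) :
  NGDD m n U G A -> GDD U mu B -> (forall X, X \in A -> X \notin B) ->
  (forall X, X \in C -> X \subset U /\ #|X| = 3%N) -> (size C < 'C(#|U|, 3))%N ->
  jbalanced U C 3 -> #|S| = 3%N -> (lam (A ++ B ++ C) S <= 1)%N.
Proof.
move=> hA hB AB C3 small balC S3; rewrite catA lam_cat.
have [SU|SnU] := boolP (S \subset U); last first.
  rewrite (lam_out (fun X XC => (C3 X XC).1) SnU) addn0 lam_triple_le1 //.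
    rewrite cat_uniq hA.1 hB.1 andbT /=.
    by apply/hasPn => X XB; apply/negP => /AB; rewrite XB.
  by move=> X; rewrite mem_cat => /orP[/hA.2.1 | /hB.2.1[]].
have [x [y [xS yS xy]]] : exists x y, [/\ x \in S, y \in S & x != y].
  by apply/card_gt1P; rewrite S3.
have xyU : [set x; y] \subset U.
  by rewrite (subset_trans _ SU) // subUset !sub1set xS yS.
have xyS : [set x; y] \subset S by rewrite subUset !sub1set xS yS.
have lamA : lam A [set x; y] = 0%N by apply/eqP; rewrite -eqz_nat (lam_NGDD_pair hA xy) xyU.
have := lam_sub (A ++ B) xyS; rewrite !lam_cat lamA (lam_GDD_pair hB xy) xyU leqn0 => /eqP->.
exact: balanced_lam_le1 C3 small balC SU S3.
Qed.

Lemma nearly2balanced_grow (C F : seq {set T}) (lam0 : nat) (d : int) :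
  (forall X, X \in C -> X \subset U /\ #|X| = 3%N) -> (forall X, X \in F -> #|X| = 3%N) ->
  defect_split C F lam0 ->
  C2 #|U| (size C) lam0 d ->
  (if (d == (#|U|./2)%:Z %[mod 2])%Z then defect_iso U C lam0 0 d
   else defect_iso U C lam0 1 d \/ defect_iso U C lam0 2 d) ->
  nearly2balanced [set: T] F.
Proof.
move=> C3 F3 EF [U_even [lam0_odd [countC [d_gt d_lt]]]] isoC.
have isoF k : defect_iso U C lam0 k d -> defect_iso [set: T] F lam0 k (m%:Z - n%:Z + d).
  by move/defect_iso_grow; apply.
have [k /isoF isoFk] : exists k, defect_iso U C lam0 k d.
  by case: ifP isoC => _; [exists 0%N | case; eexists; eassumption].
exists lam0, (m%:Z - n%:Z + d); split; [|split].
- rewrite /C2 /assoc_pair (card_blocks_grow C3 F3 EF countC) cardsT card_group_partition.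
  rewrite oddD oddM andFb addbF U_even lam0_odd; do 3 split => //; lia.
- by move=> x y xT yT xy; apply: defect_iso_range isoFk xT yT xy.
rewrite cardsT card_group_partition defect_parity_grow //.
by case: ifP isoC => _; [exact: isoF | case=> /isoF; [left | right]].
Qed.

End GroupPartition.

Theorem lemma6p5 (T : finType) (m n u c lam0 : nat) (delta : int)
  (U : {set T}) (G : 'I_(m + n) -> {set T}) (A B C : seq {set T}) :
  (3 %| m)%N -> (3 %| n)%N -> (u %% 6 = 2 \/ u %% 6 = 4)%N ->
  #|U| = u ->
  (forall i, #|G i| = 2%N) ->
  (forall i j, i != j -> [disjoint G i & G j]) ->
  (forall i, [disjoint G i & U]) ->
  U :|: \bigcup_(i < (m + n)%N) G i = [set: T] ->
  (c < 'C(u, 3))%N ->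
  C2 u c lam0 delta ->
  NGDD m n U G A ->
  GDD U (lam0 - 1) B ->
  NWBTS U c C ->
  (forall X, X \in A -> X \notin B) ->
  (forall X, X \in A -> X \notin C) ->
  (forall X, X \in B -> X \notin C) ->
  NWBTS [set: T] (size (A ++ B ++ C)) (A ++ B ++ C) /\
  (3 * size (A ++ B ++ C))%:Z =
    (lam0 * 'C(#|T|, 2))%:Z + m%:Z - n%:Z + delta.
Proof.
move=> _ _ _ <- G2 Gdisj GU Gcov small C2U hA hB
  [[U3 CU] [Ec [[l [e [[_ [_ apC]] [_ isoC]]]] balC]]] AB _ _.
subst c; have [El Ee] := assoc_pair_unique U3 apC C2U.2.2; subst l e.
have partG : group_partition U G by split.
have lam0_gt0 : (0 < lam0)%N by rewrite lt0n; apply: contraTneq C2U.2.1 => ->.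
have EF := defect_split_union partG hA hB (fun X XC => (CU X XC).1) lam0_gt0.
have F3 X : X \in A ++ B ++ C -> #|X| = 3%N.
  by rewrite !mem_cat => /or3P[/hA.2.1 | /hB.2.1[] | /CU[]].
split; last by rewrite (card_blocks_grow partG CU F3 EF C2U.2.2.1) !addrA.
split.
  split=> [|X /F3]; last by rewrite subsetT.
  by rewrite cardsT (card_group_partition partG); lia.
split=> //; split; first exact: (nearly2balanced_grow partG CU F3 EF C2U isoC).
by apply: jbalanced_le1 => S _; exact: (lam_union_triple_le1 partG hA hB AB CU small balC).
Qed.
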